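(* Fix $0<p<1$. For a random fan $\Sigma$ chosen with respect to $T(h,p)$, with high probability $X(\Sigma)$ is singular.
   Context: A ray is a half-line $\rho=\mathbb{R}_{\ge 0}v\subset\mathbb{R}^2$ with $v\in\mathbb{Z}^2\setminus\{0\}$; $u_\rho$ denotes its primitive lattice generator. On $\mathbb{Z}^2$ use the norm $|(x,y)|=\max\{|x|,|y|\}$, and $|\rho|=|u_\rho|$. The completion of a finite set $S$ of rays is the fan with ray set $S$ that is maximal under inclusion among fans with ray set $S$ (its $2$-dimensional cones are spanned by angularly consecutive rays of $S$ at angle less than $\pi$). $T(h,p)$ is the distribution on fans obtained by including each ray $\rho$ with $|\rho|\le h$ independently with probability $p$ and completing. $X(\Sigma)$ is the toric surface of $\Sigma$; it is singular iff some $2$-dimensional cone spanned by rays $\rho,\tau$ has $|\det(u_\rho,u_\tau)|>1$. ''With high probability'' means with probability tending to $1$ as $h\to\infty$. *)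

From Stdlib Require Import Reals ZArith List Bool.
Import ListNotations.
Open Scope R_scope.

(* A ray is represented by its primitive lattice generator u = (x,y) in Z^2. *)
Definition vec := (Z * Z)%type.

Definition detZ (u v : vec) : Z := (fst u * snd v - snd u * fst v)%Z.

Definition zrange (h : nat) : list Z :=
  map (fun k => (Z.of_nat k - Z.of_nat h)%Z) (seq 0 (2 * h + 1)).

(* primitive generators u_rho of all rays rho with |rho| = max(|x|,|y|) <= h
   (gcd(0,0) = 0 so the zero vector is excluded) *)
Definition rays (h : nat) : list vec :=
  filter (fun u => Z.eqb (Z.gcd (fst u) (snd u)) 1) (list_prod (zrange h) (zrange h)).

(* all sub-lists (= all subsets, since rays h has no duplicates) *)
Fixpoint powerlist {A : Type} (l : list A) : list (list A) :=
  match l with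
  | nil => [nil]
  | x :: t => map (cons x) (powerlist t) ++ powerlist t
  end.

Definition memb (u : vec) (S : list vec) : bool :=
  existsb (fun w => Z.eqb (fst w) (fst u) && Z.eqb (snd w) (snd u)) S.

(* u, v span a 2-dimensional cone of the completion of S: v follows u
   counterclockwise at an angle in (0, pi) (det u v > 0) and no ray of S lies
   strictly between them. *)
Definition is_cone2b (S : list vec) (u v : vec) : bool :=
  memb u S && memb v S && Z.ltb 0 (detZ u v) &&
  forallb (fun w => negb (Z.ltb 0 (detZ u w) && Z.ltb 0 (detZ w v))) S.

(* X(Sigma) singular: some 2-dim cone of the completion has |det| > 1 *)
Definition singular_completion (S : list vec) : bool :=
  existsb (fun u => existsb (fun v =>
     is_cone2b S u v && Z.ltb 1 (Z.abs (detZ u v))) S) S.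

(* probability under T(h,p) that X(Sigma) is singular *)
Definition prob_singular (p : R) (h : nat) : R :=
  let N := length (rays h) in
  fold_right Rplus 0
    (map (fun S => if singular_completion S
                   then p ^ length S * (1 - p) ^ (N - length S) else 0)
         (powerlist (rays h))).

(** Cut the column [x = 1] near its top into [m = h/6] disjoint triples
    [(1,z), (1,z+1), (1,z+2)] with [2z >= h + 2].  If a random fan contains the
    two outer rays of a triple but not the middle one, the outer rays span a
    cone of the completion of determinant [2]: the middle ray is the only
    primitive vector of the box strictly inside that cone.  The triples are
    independent and each has this pattern with probability [q = p (1-p) p],
    so [X(Sigma)] is smooth with probability at most [(1 - q)^(h/6)]. *)

From Stdlib Require Import Reals ZArith List Lia Lra.
Import ListNotations.
Open Scope R_scope.

Lemma fold_Rplus_app (l1 l2 : list R) :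
  fold_right Rplus 0 (l1 ++ l2) = fold_right Rplus 0 l1 + fold_right Rplus 0 l2.
Proof. induction l1 as [|x t IH]; simpl; [ring | rewrite IH; ring]. Qed.

Lemma fold_Rplus_map_scal {B : Type} (c : R) (g : B -> R) (l : list B) :
  fold_right Rplus 0 (map (fun x => c * g x) l) = c * fold_right Rplus 0 (map g l).
Proof. induction l as [|x t IH]; simpl; [ring | rewrite IH; ring]. Qed.

Lemma powerlist_length_le {A : Type} (l S : list A) :
  In S (powerlist l) -> (length S <= length l)%nat.
Proof.
  revert S; induction l as [|x t IH]; simpl; intros S HS.
  - destruct HS as [<- | []]; simpl; lia.
  - apply in_app_iff in HS as [HS | HS].
    + apply in_map_iff in HS as [S' [<- HS']]; simpl; specialize (IH _ HS'); lia.
    + specialize (IH _ HS); lia.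
Qed.

Fixpoint flat3 {A : Type} (ts : list (A * A * A)) : list A :=
  match ts with
  | nil => nil
  | (a, b, c) :: ts => a :: b :: c :: flat3 ts
  end.

Definition has_gap {A : Type} (ts : list (A * A * A)) (S : list A) : Prop :=
  exists a b c, In (a, b, c) ts /\ In a S /\ In c S /\ ~ In b S.

Lemma in_flat3_mid {A : Type} (ts : list (A * A * A)) (a b c : A) :
  In (a, b, c) ts -> In b (flat3 ts).
Proof.
  induction ts as [|[[a' b'] c'] ts IH]; simpl; [tauto |].
  intros [E | H]; [injection E as -> -> ->; tauto | auto].
Qed.

Section BernoulliSublist.

Context {A : Type} (p : R).

(* Expectation of [f] at the random sublist of [l] keeping every entry
   independently with probability [p]. *)
Fixpoint expect_bern (l : list A) (f : list A -> R) : R :=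
  match l with
  | nil => f nil
  | x :: t => p * expect_bern t (fun S => f (x :: S)) + (1 - p) * expect_bern t f
  end.

Lemma expect_bern_powerlist (l : list A) (f : list A -> R) :
  fold_right Rplus 0
    (map (fun S => p ^ length S * (1 - p) ^ (length l - length S) * f S) (powerlist l))
  = expect_bern l f.
Proof.
  revert f; induction l as [|x t IH]; intros f; [simpl; ring |].
  cbn [expect_bern powerlist length].
  rewrite map_app, fold_Rplus_app, map_map, <- !IH, <- !fold_Rplus_map_scal.
  f_equal.
  - f_equal; apply map_ext; intros S; simpl; ring.
  - f_equal; apply map_ext_in; intros S HS.
    apply powerlist_length_le in HS.
    rewrite Nat.sub_succ_l by exact HS; simpl; ring.
Qed.

Lemma expect_bern_const (l : list A) (c : R) : expect_bern l (fun _ => c) = c.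
Proof. induction l as [|x t IH]; simpl; [| rewrite IH]; ring. Qed.

Lemma expect_bern_compl (l : list A) (f : list A -> R) :
  expect_bern l (fun S => 1 - f S) = 1 - expect_bern l f.
Proof.
  revert f; induction l as [|x t IH]; intros f; simpl; [ring |].
  rewrite (IH (fun S => f (x :: S))), IH; ring.
Qed.

Lemma expect_bern_app (l1 l2 : list A) (f : list A -> R) :
  expect_bern (l1 ++ l2) f
  = expect_bern l1 (fun T => expect_bern l2 (fun S => f (T ++ S))).
Proof.
  revert f; induction l1 as [|x t IH]; intros f; simpl; [reflexivity |].
  rewrite !IH; reflexivity.
Qed.

Hypothesis p_prob : 0 <= p <= 1.

Lemma expect_bern_le (l : list A) (f g : list A -> R) :
  (forall S, incl S l -> f S <= g S) -> expect_bern l f <= expect_bern l g.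
Proof.
  revert f g; induction l as [|x t IH]; intros f g Hfg; simpl.
  - apply Hfg, incl_nil_l.
  - apply Rplus_le_compat; apply Rmult_le_compat_l; try lra; apply IH;
      intros S HS; apply Hfg.
    + apply incl_cons; [left; reflexivity | now apply incl_tl].
    + now apply incl_tl.
Qed.

Lemma expect_bern_le_const (l : list A) (f : list A -> R) (c : R) :
  (forall S, incl S l -> f S <= c) -> expect_bern l f <= c.
Proof.
  intros Hf; rewrite <- (expect_bern_const l c); now apply expect_bern_le.
Qed.

Lemma expect_bern_triple_le (a b c : A) (F : list A -> R) (X : R) :
  (forall T, incl T [a; b; c] -> F T <= X) -> F [a; c] <= 0 ->
  expect_bern [a; b; c] F <= (1 - p * (1 - p) * p) * X.
Proof.
  intros HX Hac; simpl.
  apply Rle_trans with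
    (p * (p * (p * X + (1 - p) * X) + (1 - p) * (p * 0 + (1 - p) * X)) +
     (1 - p) * (p * (p * X + (1 - p) * X) + (1 - p) * (p * X + (1 - p) * X))).
  - repeat (apply Rplus_le_compat || (apply Rmult_le_compat_l; [lra |]));
      first [exact Hac | apply HX; intros v; simpl; tauto].
  - apply Req_le; ring.
Qed.

(* Disjoint triples show their gap pattern independently, each with probability
   [p (1-p) p]. *)
Lemma expect_bern_triples_le (ts : list (A * A * A)) (r : list A) (g : list A -> R) :
  NoDup (flat3 ts ++ r) -> (forall S, g S <= 1) ->
  (forall S, incl S (flat3 ts ++ r) -> has_gap ts S -> g S = 0) ->
  expect_bern (flat3 ts ++ r) g <= (1 - p * (1 - p) * p) ^ length ts.
Proof.
  revert g; induction ts as [|[[a b] c] ts IH]; intros g Hnd Hg1 Hg0.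
  { simpl; apply expect_bern_le_const; intros S _; apply Hg1. }
  cbn [flat3 app length pow] in *.
  apply NoDup_cons_iff in Hnd as [Ha Hnd].
  apply NoDup_cons_iff in Hnd as [Hb Hnd].
  apply NoDup_cons_iff in Hnd as [Hc Hnd].
  change (a :: b :: c :: flat3 ts ++ r) with ([a; b; c] ++ (flat3 ts ++ r)).
  rewrite expect_bern_app; apply expect_bern_triple_le.
  - intros T HT; apply IH; [exact Hnd | intros; apply Hg1 |].
    intros S HS [a' [b' [c' [Ht [Ha' [Hc' Hb']]]]]]; apply Hg0.
    + intros v Hv; apply in_app_iff in Hv as [Hv | Hv].
      * destruct (HT v Hv) as [<- | [<- | [<- | []]]]; simpl; tauto.
      * simpl; do 3 right; now apply HS.
    + exists a', b', c'; repeat split; [now right | apply in_or_app; auto ..|].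
      rewrite in_app_iff; intros [Hin | Hin]; [| contradiction].
      assert (Hmid : In b' (flat3 ts ++ r)) by (apply in_or_app; left; eapply in_flat3_mid; eauto).
      destruct (HT b' Hin) as [<- | [<- | [<- | []]]].
      * now apply Ha; do 2 right.
      * now apply Hb; right.
      * now apply Hc.
  - apply expect_bern_le_const; intros S HS; right; apply Hg0.
    + intros v [<- | [<- | Hv]]; simpl; auto.
    + exists a, b, c; repeat split; simpl; auto.
      intros [E | [E | Hin]].
      * now apply Ha; left.
      * now apply Hb; left.
      * now apply Hb; right; apply HS.
Qed.

End BernoulliSublist.

Lemma in_zrange h z : In z (zrange h) -> (- Z.of_nat h <= z <= Z.of_nat h)%Z.
Proof.
  unfold zrange; intros Hz.
  apply in_map_iff in Hz as [k [<- Hk]]; apply in_seq in Hk; lia.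
Qed.

Lemma in_rays h u : In u (rays h) ->
  (- Z.of_nat h <= fst u <= Z.of_nat h)%Z /\ (- Z.of_nat h <= snd u <= Z.of_nat h)%Z.
Proof.
  unfold rays; intros Hu; apply filter_In in Hu as [Hu _].
  destruct u as [x z]; apply in_prod_iff in Hu as [Hx Hz].
  split; now apply in_zrange.
Qed.

Lemma memb_In u S : In u S -> memb u S = true.
Proof.
  intros Hu; unfold memb; apply existsb_exists; exists u.
  now rewrite !Z.eqb_refl.
Qed.

(* A ray [(x,z)] strictly inside the cone has [1 <= z - y x] and [1 <= x (y+2) - z],
   whence [x >= 1]; and [x >= 2] would force [z > 2y > h]. *)
Lemma singular_of_column_gap h S y :
  incl S (rays h) -> In (1, y)%Z S -> In (1, y + 2)%Z S -> ~ In (1, y + 1)%Z S ->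
  (Z.of_nat h + 2 <= 2 * y)%Z -> singular_completion S = true.
Proof.
  intros HS Hlo Hhi Hmid Hy; unfold singular_completion.
  apply existsb_exists; exists (1, y)%Z; split; [exact Hlo |].
  apply existsb_exists; exists (1, y + 2)%Z; split; [exact Hhi |].
  unfold is_cone2b, detZ; cbn [fst snd].
  rewrite (memb_In _ _ Hlo), (memb_In _ _ Hhi).
  replace (1 * (y + 2) - y * 1)%Z with 2%Z by ring.
  apply andb_true_intro; split; [| reflexivity].
  apply andb_true_intro; split; [reflexivity |].
  apply forallb_forall; intros [x z] Hw.
  destruct (in_rays _ _ (HS _ Hw)) as [Hx Hz]; cbn [fst snd] in *.
  rewrite Z.mul_1_l, Z.mul_1_r.
  destruct (Z.ltb_spec 0 (z - y * x)); [| reflexivity].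
  destruct (Z.ltb_spec 0 (x * (y + 2) - z)); [| reflexivity].
  exfalso.
  assert (x = 1)%Z by nia; subst x.
  assert (z = y + 1)%Z by lia; subst z.
  contradiction.
Qed.

Fixpoint column_triples (y : Z) (m : nat) : list (vec * vec * vec) :=
  match m with
  | O => nil
  | S m => ((1, y), (1, y + 1), (1, y + 2))%Z :: column_triples (y + 3) m
  end.

Lemma length_column_triples y m : length (column_triples y m) = m.
Proof. revert y; induction m as [|m IH]; intros y; simpl; [| rewrite IH]; reflexivity. Qed.

Lemma in_column_triples y m a b c : In (a, b, c) (column_triples y m) ->
  exists z, (y <= z)%Z /\ a = (1, z)%Z /\ b = (1, z + 1)%Z /\ c = (1, z + 2)%Z.
Proof.
  revert y; induction m as [|m IH]; intros y; simpl; [tauto |].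
  intros [E | H].
  - injection E as <- <- <-; exists y; repeat split; lia.
  - destruct (IH _ H) as [z [Hz E]]; exists z; split; [lia | exact E].
Qed.

Lemma column_segment (n : Z) (a m : nat) :
  map (fun k => (1, Z.of_nat k - n)%Z) (seq a (3 * m))
  = flat3 (column_triples (Z.of_nat a - n) m).
Proof.
  revert a; induction m as [|m IH]; intros a; [reflexivity |].
  replace (3 * S m)%nat with (S (S (S (3 * m)))) by lia; cbn [seq map column_triples flat3].
  rewrite IH; repeat (f_equal; try lia).
Qed.

Lemma list_prod_cons_app {B C : Type} (l1 l2 : list B) (b : B) (l : list C) :
  list_prod (l1 ++ b :: l2) l = list_prod l1 l ++ map (pair b) l ++ list_prod l2 l.
Proof.
  induction l1 as [|x t IH]; simpl; [reflexivity |].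
  now rewrite IH, app_assoc.
Qed.

Lemma NoDup_list_prod {B C : Type} (l1 : list B) (l2 : list C) :
  NoDup l1 -> NoDup l2 -> NoDup (list_prod l1 l2).
Proof.
  intros H1 H2; induction H1 as [|x t Hx Ht IH]; simpl; [constructor |].
  apply NoDup_app; [| exact IH |].
  - apply NoDup_map_NoDup_ForallPairs; [| exact H2].
    intros u v _ _ E; now injection E.
  - intros [u v] Hin Hin'; apply in_map_iff in Hin as [w [E _]]; injection E as <- _.
    now apply in_prod_iff in Hin' as [Hx' _].
Qed.

Lemma NoDup_app_disjoint {B : Type} (l1 l2 : list B) (x : B) :
  NoDup (l1 ++ l2) -> In x l1 -> ~ In x l2.
Proof.
  induction l1 as [|y t IH]; simpl; intros Hnd Hx; [contradiction |].
  apply NoDup_cons_iff in Hnd as [Hy Hnd]; destruct Hx as [<- | Hx].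
  - intros Hx2; apply Hy, in_or_app; now right.
  - now apply IH.
Qed.

Lemma NoDup_rays h : NoDup (rays h).
Proof.
  unfold rays; apply NoDup_filter.
  assert (Hz : NoDup (zrange h)).
  { apply NoDup_map_NoDup_ForallPairs; [| apply seq_NoDup].
    intros u v _ _ E; lia. }
  now apply NoDup_list_prod.
Qed.

Lemma rays_split h m : (3 * m <= h)%nat -> exists pre post,
  rays h = pre ++ flat3 (column_triples (Z.of_nat h + 1 - 3 * Z.of_nat m) m) ++ post.
Proof.
  intros Hm; destruct (Nat.eq_dec h 0) as [-> | Hh].
  { replace m with 0%nat by lia; exists (rays 0), nil; now rewrite app_nil_r. }
  assert (H1 : In 1%Z (zrange h)).
  { apply in_map_iff; exists (S h); split; [lia | apply in_seq; lia]. }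
  apply in_split in H1 as [Xl [Xr HX]].
  assert (Htop : zrange h =
    map (fun k => Z.of_nat k - Z.of_nat h)%Z (seq 0 (2 * h + 1 - 3 * m)) ++
    map (fun k => Z.of_nat k - Z.of_nat h)%Z (seq (2 * h + 1 - 3 * m) (3 * m))).
  { unfold zrange; rewrite <- map_app, <- seq_app.
    now rewrite Nat.sub_add by lia. }
  set (primitive := fun u : vec => (Z.gcd (fst u) (snd u) =? 1)%Z).
  assert (Hcol : forall l, filter primitive (map (pair 1%Z) l) = map (pair 1%Z) l).
  { induction l as [|z l IH]; [reflexivity |]; cbn [filter map].
    unfold primitive at 1; cbn [fst snd]; now rewrite Z.gcd_1_l, IH. }
  exists (filter primitive (list_prod Xl (zrange h)) ++
          map (pair 1%Z) (map (fun k => Z.of_nat k - Z.of_nat h)%Z (seq 0 (2 * h + 1 - 3 * m)))).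
  exists (filter primitive (list_prod Xr (zrange h))).
  unfold rays; rewrite HX at 1; rewrite list_prod_cons_app, !filter_app, Hcol.
  rewrite Htop at 2; rewrite map_app, !map_map, column_segment.
  replace (Z.of_nat (2 * h + 1 - 3 * m) - Z.of_nat h)%Z
    with (Z.of_nat h + 1 - 3 * Z.of_nat m)%Z by lia.
  now rewrite !app_assoc.
Qed.

Definition singular_ind (S : list vec) : R := if singular_completion S then 1 else 0.

Lemma prob_singular_expect p h : prob_singular p h = expect_bern p (rays h) singular_ind.
Proof.
  rewrite <- expect_bern_powerlist; unfold prob_singular; cbv zeta.
  f_equal; apply map_ext; intros S.
  unfold singular_ind; destruct (singular_completion S); ring.
Qed.

Lemma prob_singular_bound p h : 0 < p < 1 ->
  Rabs (prob_singular p h - 1) <= (1 - p * (1 - p) * p) ^ (h / 6).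
Proof.
  intros Hp; set (m := (h / 6)%nat).
  assert (Hm : (6 * m <= h)%nat) by apply Nat.Div0.mul_div_le.
  assert (Hind : forall S, 0 <= singular_ind S <= 1)
    by (intros S; unfold singular_ind; destruct (singular_completion S); lra).
  assert (Hle1 : prob_singular p h <= 1).
  { rewrite prob_singular_expect; apply expect_bern_le_const; [lra | intros S _; apply Hind]. }
  rewrite Rabs_minus_sym, Rabs_right by lra.
  rewrite prob_singular_expect, <- expect_bern_compl.
  destruct (rays_split h m ltac:(lia)) as [pre [post Hsplit]].
  set (y := (Z.of_nat h + 1 - 3 * Z.of_nat m)%Z) in Hsplit.
  pose proof (NoDup_rays h) as Hnd; rewrite Hsplit in Hnd |- *.
  rewrite expect_bern_app; apply expect_bern_le_const; [lra |]; intros T HT.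
  rewrite <- (length_column_triples y m) at 2.
  apply expect_bern_triples_le; [lra | eapply NoDup_app_remove_l; eauto | |].
  - intros S; specialize (Hind (T ++ S)); lra.
  - intros S HS [a [b [c [Ht [Ha [Hc Hb]]]]]].
    destruct (in_column_triples _ _ _ _ _ Ht) as [z [Hz [-> [-> ->]]]].
    unfold singular_ind; rewrite (singular_of_column_gap h (T ++ S) z); [ring | | | | | lia].
    + rewrite Hsplit; now apply incl_app_app.
    + apply in_or_app; now right.
    + apply in_or_app; now right.
    + rewrite in_app_iff; intros [Hin | Hin]; [| contradiction].
      apply (NoDup_app_disjoint _ _ _ Hnd (HT _ Hin)), in_or_app; left.
      eapply in_flat3_mid; exact Ht.
Qed.

Lemma Un_cv_of_pow_div_bound (u : nat -> R) (l r : R) (k : nat) :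
  0 <= r < 1 -> (0 < k)%nat ->
  (forall n, Rabs (u n - l) <= r ^ (n / k)) -> Un_cv u l.
Proof.
  intros Hr Hk Hu eps Heps.
  destruct (pow_lt_1_zero r ltac:(rewrite Rabs_right; lra) eps Heps) as [N HN].
  exists (k * N)%nat; intros n Hn; unfold R_dist.
  eapply Rle_lt_trans; [apply Hu |].
  eapply Rle_lt_trans; [apply Rle_abs | apply HN].
  unfold ge in *; rewrite <- (Nat.div_mul N k) by lia.
  apply Nat.Div0.div_le_mono; lia.
Qed.

Theorem mainTheorem2 (p : R) (hp0 : 0 < p) (hp1 : p < 1) :
  Un_cv (fun h => prob_singular p h) 1.
Proof.
  apply (Un_cv_of_pow_div_bound _ _ (1 - p * (1 - p) * p) 6); [| lia |].
  - assert (Hq : 0 < (1 - p) * p < 1) by (split; nra).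
    rewrite Rmult_assoc; split; nra.
  - intros h; apply prob_singular_bound; lra.
Qed.
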